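(* Let $\mu$ be critical, let $\xi_1,\dots,\xi_n$ be i.i.d. with law $\mu$, and let $\bar\xi_1,\bar\xi_2,\dots$ be i.i.d. with the size-biased law of $\xi_1$. Then for $1\le m<n$ and any non-negative measurable $f:\mathbb Z^m\to\mathbb R_+$, $$\mathbb E\big[f(\widehat D^n_1,\dots,\widehat D^n_m)\mathbf 1\{N_n\ge m\}\big]=\mathbb E\big[f(\bar\xi_1,\dots,\bar\xi_m)\,\Theta^n(\bar\xi_1,\dots,\bar\xi_m)\big],$$ where for $k_1,\dots,k_m\in\mathbb N$ with $k_1+\dots+k_m\le n-1$, $$\Theta^n(k_1,\dots,k_m)=\frac{\mathbb P\big(\sum_{i=m+1}^n\xi_i=n-1-\sum_{i=1}^mk_i\big)}{\mathbb P\big(\sum_{i=1}^n\xi_i=n-1\big)}\prod_{i=1}^m\frac{n-i+1}{n-1-\sum_{j=1}^{i-1}k_j},$$ and $\Theta^n(k_1,\dots,k_m)=0$ otherwise.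
   Context: $\mu$ is a law on $\mathbb Z_{\ge0}$ with support of gcd $1$; critical means mean $1$; the size-biased law is $\mathbb P(\bar\xi=k)=k\mu_k$. $D^n=(D^n_1,\dots,D^n_n)$ is a vector of i.i.d. $\mu$-distributed variables conditioned on $\sum_iD^n_i=n-1$, and $N_n=|\{i\in[n]:D^n_i>0\}|$. Size-biased random re-ordering of positive numbers $(k_1,\dots,k_N)$: the random permutation $\Sigma$ of $[N]$ with $\mathbb P(\Sigma=\sigma)=\prod_{i=1}^N k_{\sigma(i)}/\sum_{j=i}^Nk_{\sigma(j)}$, giving $(k_{\Sigma(1)},\dots,k_{\Sigma(N)})$. $\widehat D^n=(\widehat D^n_1,\dots,\widehat D^n_{N_n})$ is the size-biased random re-ordering of the positive entries of $D^n$. *)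

From HB Require Import structures.
From mathcomp Require Import all_boot all_order all_algebra all_fingroup.
From mathcomp Require Import all_classical all_reals all_analysis.
Set Implicit Arguments. Unset Strict Implicit. Unset Printing Implicit Defensive.
Import Order.TTheory GRing.Theory Num.Theory.
Import numFieldNormedType.Exports.
Local Open Scope classical_set_scope.
Local Open Scope ring_scope.

(* A law mu on Z_{>=0} is given by its mass function mu : nat -> R. *)
Definition is_law (R : realType) (mu : nat -> R) : Prop :=
  (forall k, 0 <= mu k) /\ (fun N : nat => \sum_(k < N) mu k) @ \oo --> (1 : R).

Definition support_gcd1 (R : realType) (mu : nat -> R) : Prop :=
  forall d : nat, (forall k, 0 < mu k -> (d %| k)%N) -> d = 1%N.

Definition critical (R : realType) (mu : nat -> R) : Prop :=
  (fun N : nat => \sum_(k < N) k%:R * mu k) @ \oo --> (1 : R).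

(* conv_pow mu r j = P(xi_1 + ... + xi_r = j) for xi_i i.i.d. with law mu *)
Fixpoint conv_pow (R : realType) (mu : nat -> R) (r : nat) (j : nat) : R :=
  match r with
  | O => if j == 0%N then 1 else 0
  | r'.+1 => \sum_(i < j.+1) mu i * conv_pow mu r' (j - i)
  end.

Definition pos_entries (n : nat) (d : {ffun 'I_n -> 'I_n}) : seq nat :=
  [seq (d i : nat) | i <- enum 'I_n & (0 < d i)%N].

(* probability of the permutation sigma under the size-biased random
   re-ordering of the positive numbers s = (k_1,...,k_N) (0-indexed) *)
Definition sb_perm_prob (R : realType) (s : seq nat) (sigma : 'S_(size s)) : R :=
  \prod_(i < size s)
    ((nth 0%N s (sigma i))%:R /
       \sum_(j < size s | (i <= j)%N) (nth 0%N s (sigma j))%:R).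

Definition sb_reorder (s : seq nat) (sigma : 'S_(size s)) : seq nat :=
  [seq nth 0%N s (sigma i) | i <- enum 'I_(size s)].

(* E[ f(hatD^n_1..hatD^n_m) 1{N_n >= m} ], the law of D^n being
   P(D^n = d) = prod_i mu(d_i) / P(xi_1+...+xi_n = n-1) on {sum d = n-1}
   (all such d have entries <= n-1, hence d : 'I_n -> 'I_n). *)
Definition lhs_expect (R : realType) (mu : nat -> R) (n m : nat)
    (f : {ffun 'I_m -> int} -> R) : R :=
  \sum_(d : {ffun 'I_n -> 'I_n} | (\sum_(i < n) (d i : nat))%N == n.-1)
    ((\prod_(i < n) mu (d i)) / conv_pow mu n n.-1) *
    \sum_(sigma : 'S_(size (pos_entries d)))
       sb_perm_prob R sigma *
       (if (m <= size (pos_entries d))%N then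
          f [ffun i : 'I_m => ((nth 0%N (sb_reorder sigma) i) : int)]
        else 0).

(* Theta^n(k_1,...,k_m), 0-indexed: factor i (0 <= i < m) is
   (n - i) / (n - 1 - sum_{j<i} k_j) *)
Definition Theta (R : realType) (mu : nat -> R) (n m : nat) (k : 'I_m -> nat) : R :=
  if (\sum_(i < m) k i <= n.-1)%N then
    conv_pow mu (n - m) (n.-1 - \sum_(i < m) k i)%N / conv_pow mu n n.-1 *
    \prod_(i < m) ((n - i)%:R / (n.-1 - \sum_(j < m | (j < i)%N) k j)%:R)
  else 0.

(* E[ f(barxi_1..barxi_m) Theta^n(barxi_1..barxi_m) ] with barxi i.i.d. of law
   P(barxi = k) = k mu_k.  Theta vanishes unless sum k_i <= n-1, so only
   k with all k_i <= n-1 contribute; the sum is restricted to those. *)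
Definition rhs_expect (R : realType) (mu : nat -> R) (n m : nat)
    (f : {ffun 'I_m -> int} -> R) : R :=
  \sum_(k : {ffun 'I_m -> 'I_n})
     (\prod_(i < m) ((k i : nat)%:R * mu (k i))) *
     f [ffun i : 'I_m => ((k i : nat) : int)] *
     Theta mu n (fun i => (k i : nat)).

Arguments lhs_expect {R} mu n m f.
Arguments rhs_expect {R} mu n m f.
Arguments Theta {R} mu n m k.
Arguments conv_pow {R} mu r j.

From mathcomp Require Import all_boot all_order all_algebra all_fingroup.
From mathcomp Require Import all_classical all_reals all_analysis.
From mathcomp Require Import zify ring.
Import Order.TTheory GRing.Theory Num.Theory.
Set Implicit Arguments. Unset Strict Implicit. Unset Printing Implicit Defensive.
Local Open Scope ring_scope.

(* Expand both sides as sums over words: w = (w_1, ..., w_n) on the left,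
   k = (k_1, ..., k_m) on the right.  On the left, the size-biased order is
   unfolded one pick at a time: the first pick is the entry w_j with
   probability w_j / (n - 1), and the later picks are a size-biased order of w
   with w_j removed.  The weight prod_i mu(w_i) 1{sum w = n - 1} of a word is
   invariant under permutations, so summing over the words and over the
   picked position amounts to n times putting the picked letter a in front; it
   contributes a mu(a) n / (n - 1), and what remains is a word of length n - 1
   and total n - 1 - a with a weight of the same form.  Induction on m yields
   the factors (n - i) / (n - 1 - sum_{j<i} k_j) of Theta^n, and the words left
   after m picks add up to P(xi_{m+1} + ... + xi_n = n - 1 - sum k). *)

Local Notation positives s := [seq x <- s | (0 < x)%N].

Definition rem_at (j : nat) (s : seq nat) : seq nat := take j s ++ drop j.+1 s.

Lemma rem_at0 a s : rem_at 0 (a :: s) = s.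
Proof. by rewrite /rem_at /= drop0. Qed.

Lemma size_rem_at j s : (j < size s)%N -> size (rem_at j s) = (size s).-1.
Proof. by move=> lt_js; rewrite size_cat size_take size_drop lt_js; lia. Qed.

Lemma nth_rem_at s j k : (j < size s)%N ->
  nth 0%N (rem_at j s) k = nth 0%N s (bump j k).
Proof.
move=> lt_js; rewrite nth_cat size_take lt_js /bump.
case: ltnP => [lt_kj | le_jk]; first by rewrite nth_take // leqNgt lt_kj.
by rewrite nth_drop; congr nth; lia.
Qed.

Lemma sumn_rem_at j s : (j < size s)%N -> sumn (rem_at j s) = (sumn s - nth 0%N s j)%N.
Proof.
move=> lt_js; rewrite -{2}(cat_take_drop j s) (drop_nth 0%N lt_js) /rem_at !sumn_cat /=.
lia.
Qed.

Lemma all_rem_at (p : pred nat) j s : all p s -> all p (rem_at j s).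
Proof.
by move=> /allP ps; apply/allP => x; rewrite mem_cat => /orP[/mem_take|/mem_drop] /ps.
Qed.

Lemma sumn_take (s : seq nat) i :
  sumn (take i s) = (\sum_(j < size s | (j < i)%N) nth 0%N s j)%N.
Proof.
elim: s i => [|x s IH] [|i] /=; rewrite ?big_ord0 // big_mkcond big_ord_recl /=.
  by rewrite big1.
by rewrite IH big_mkcond.
Qed.

Lemma sumn_filter_pos (s : seq nat) : sumn (positives s) = sumn s.
Proof. by elim: s => //= x s IH; case: posnP => [->|] /=; rewrite IH. Qed.

Section WordSums.
Variable R : comPzRingType.

Fixpoint sum_words (B L : nat) (F : seq nat -> R) : R :=
  if L is L'.+1 then \sum_(a < B) sum_words B L' (fun w => F ((a : nat) :: w)) else F [::].

Lemma eq_sum_words B L F G :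
  (forall w, size w = L -> F w = G w) -> sum_words B L F = sum_words B L G.
Proof.
elim: L F G => [|L IH] F G eqFG /=; first exact: eqFG.
by apply: eq_bigr => a _; apply: IH => w sz_w; rewrite eqFG //= sz_w.
Qed.

Lemma sum_wordsD B L F G :
  sum_words B L (fun w => F w + G w) = sum_words B L F + sum_words B L G.
Proof.
by elim: L F G => [|L IH] F G //=; rewrite -big_split; apply: eq_bigr => a _.
Qed.

Lemma sum_wordsZ B L c F : sum_words B L (fun w => c * F w) = c * sum_words B L F.
Proof. by elim: L F => [|L IH] F //=; rewrite mulr_sumr; apply: eq_bigr => a _. Qed.

Lemma sum_words0 B L : sum_words B L (fun=> 0) = 0.
Proof. by elim: L => //= L IH; rewrite big1. Qed.

Lemma sum_ffun_words B L (F : seq nat -> R) :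
  \sum_(d : {ffun 'I_L -> 'I_B}) F [seq (d i : nat) | i <- enum 'I_L] = sum_words B L F.
Proof.
elim: L F => [|L IH] F.
  rewrite /= (eq_bigr (fun=> F [::])) => [|d _]; last by rewrite enum_ord0.
  by rewrite sumr_const card_ffun !card_ord.
pose cons_ffun (p : 'I_B * {ffun 'I_L -> 'I_B}) : {ffun 'I_L.+1 -> 'I_B} :=
  [ffun i => if unlift ord0 i is Some k then p.2 k else p.1].
have cons_ffun_bij : bijective cons_ffun.
  exists (fun d : {ffun 'I_L.+1 -> 'I_B} => (d ord0, [ffun k => d (lift ord0 k)])).
    move=> [a d]; rewrite /= ffunE unlift_none; congr (_, _).
    by apply/ffunP => k; rewrite !ffunE liftK.
  by move=> d; apply/ffunP => i; rewrite !ffunE; case: unliftP => [k|] ->; rewrite ?ffunE.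
rewrite (reindex cons_ffun) /=; last exact: onW_bij.
rewrite -(pair_big xpredT xpredT
  (fun a d => F [seq (cons_ffun (a, d) i : nat) | i <- enum 'I_L.+1])) /=.
apply: eq_bigr => a _; rewrite -IH.
apply: eq_bigr => d _; rewrite enum_ordSl /= ffunE unlift_none -map_comp.
by congr (F (_ :: _)); apply: eq_map => k /=; rewrite ffunE liftK.
Qed.

Lemma sum_pick_cons (H : nat -> seq nat -> R) a s :
  \sum_(k < size (a :: s)) H (nth 0%N (a :: s) k) (rem_at k (a :: s)) =
  H a s + \sum_(k < size s) H (nth 0%N s k) (a :: rem_at k s).
Proof. by rewrite big_ord_recl rem_at0. Qed.

(* Exchangeability: marking one letter of a word and moving it to the front. *)
Lemma sum_words_pick B L (v : seq nat -> R) (H : nat -> seq nat -> R) :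
  (forall w w', perm_eq w w' -> v w = v w') ->
  sum_words B L (fun w => v w * \sum_(k < size w) H (nth 0%N w k) (rem_at k w)) =
  L%:R * \sum_(a < B) sum_words B L.-1 (fun w => v ((a : nat) :: w) * H a w).
Proof.
elim: L v H => [|L IH] v H v_perm /=; first by rewrite big_ord0 mulr0 mul0r.
under eq_bigr => a _.
  rewrite (@eq_sum_words B L _ (fun w => v ((a : nat) :: w) * H a w +
      v ((a : nat) :: w) * \sum_(k < size w) H (nth 0%N w k) ((a : nat) :: rem_at k w)));
    last by move=> w _; rewrite sum_pick_cons mulrDr.
  rewrite sum_wordsD (IH (fun w => v ((a : nat) :: w)) (fun b w => H b ((a : nat) :: w)));
    last by move=> w w' ww'; apply: v_perm; rewrite perm_cons.
  over.
rewrite big_split /= -mulr_sumr mulrSr mulrDl mul1r addrC; congr (_ + _).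
case: L {IH} => [|L]; first by rewrite !mul0r.
congr (_ * _); rewrite exchange_big /=; apply: eq_bigr => b _; apply: eq_bigr => a _.
apply: eq_sum_words => w _; congr (_ * _); apply: v_perm.
by rewrite (perm_catCA [:: _] [:: _] w).
Qed.

End WordSums.

Section SizeBiasedPicks.
Variable R : fieldType.

(* [sb_mean T s m g] is the mean of [g] over the first [m] picks of a
   size-biased re-ordering of [s], with [T] standing for [sumn s]. *)
Fixpoint sb_mean (T : nat) (s : seq nat) (m : nat) (g : seq nat -> R) : R :=
  if m is m'.+1 then
    \sum_(j < size s) ((nth 0%N s j)%:R / T%:R *
       sb_mean (T - nth 0%N s j) (rem_at j s) m' (fun r => g (nth 0%N s j :: r)))
  else g [::].

Lemma sum_pick_pos (H : nat -> seq nat -> R) s :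
  (forall a r, H a r = H a (positives r)) -> (forall r, H 0%N r = 0) ->
  \sum_(k < size s) H (nth 0%N s k) (rem_at k s) =
  \sum_(k < size (positives s))
    H (nth 0%N (positives s) k) (rem_at k (positives s)).
Proof.
elim: s H => [|x s IH] H H_pos H0 //.
rewrite sum_pick_cons (IH (fun a r => H a (x :: r))) => [||r]; last exact: H0.
- case: (posnP x) => [-> | x_gt0] /=.
    by rewrite H0 add0r; apply: eq_bigr => k _; rewrite H_pos [RHS]H_pos.
  by rewrite x_gt0 sum_pick_cons H_pos [in RHS]H_pos filter_id.
- by move=> a r; rewrite H_pos [RHS]H_pos /=; case: (0 < x)%N; rewrite //= filter_id.
Qed.

(* Zero entries are picked with probability zero. *)
Lemma sb_mean_pos m T s g : sb_mean T s m g = sb_mean T (positives s) m g.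
Proof.
elim: m T s g => [|m IH] T s g //=.
apply: (sum_pick_pos (H := fun a r => a%:R / T%:R * sb_mean (T - a) r m (fun r => g (a :: r)))).
  by move=> a r; rewrite IH.
by move=> r; rewrite !mul0r.
Qed.

End SizeBiasedPicks.

Lemma sum_perm_lift (V : nmodType) N (F : 'S_N.+1 -> V) :
  \sum_(t : 'S_N.+1) F t = \sum_(j < N.+1) \sum_(s : 'S_N) F (lift_perm ord0 j s).
Proof.
rewrite (partition_big (fun t : 'S_N.+1 => t ord0) predT) //=; apply: eq_bigr => j _.
pose tail (t : 'S_N.+1) k := odflt k (unlift (t ord0) (t (lift ord0 k))).
have tailK (t : 'S_N.+1) k : lift (t ord0) (tail t k) = t (lift ord0 k).
  rewrite /tail; case: unliftP => [k' -> // | /perm_inj/eqP].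
  by rewrite eq_sym (negbTE (neq_lift ord0 k)).
have tail_inj (t : 'S_N.+1) : injective (tail t).
  by move=> k k' /(congr1 (lift (t ord0))); rewrite !tailK => /perm_inj/lift_inj.
rewrite (reindex (lift_perm ord0 j)) /=.
  by apply: eq_bigl => s; rewrite lift_perm_id eqxx.
exists (fun t => perm (tail_inj t)) => [s _ | t /eqP t0].
  by apply/permP => k; rewrite permE /tail lift_perm_lift lift_perm_id liftK.
apply/permP => k; case: (unliftP ord0 k) => [k' ->| ->]; rewrite ?lift_perm_id //.
by rewrite lift_perm_lift permE -t0 tailK.
Qed.

Lemma sum_nth_natr (V : pzSemiRingType) s :
  \sum_(i < size s) (nth 0%N s i)%:R = (sumn s)%:R :> V.
Proof. by rewrite sumnE natr_sum (big_nth 0%N) big_mkord. Qed.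

Section SizeBiasedPermutations.
Variable R : numFieldType.

(* [sb_perm_prob] and [sb_reorder], with the number of entries [N] decoupled
   from [size s] so that induction on [N] can remove an entry from [s]. *)
Definition sbp N (s : seq nat) (sigma : 'S_N) : R :=
  \prod_(i < N) ((nth 0%N s (sigma i))%:R /
       \sum_(j < N | (i <= j)%N) (nth 0%N s (sigma j))%:R).

Definition sb_reord N (s : seq nat) (sigma : 'S_N) : seq nat :=
  [seq nth 0%N s (sigma i) | i <- enum 'I_N].

Lemma sb_reord_lift N s j (sigma : 'S_N) : size s = N.+1 ->
  sb_reord s (lift_perm ord0 j sigma) = nth 0%N s j :: sb_reord (rem_at j s) sigma.
Proof.
move=> sz_s; rewrite /sb_reord enum_ordSl /= lift_perm_id -map_comp; congr (_ :: _).
by apply: eq_map => k /=; rewrite lift_perm_lift nth_rem_at ?sz_s.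
Qed.

Lemma sbp_lift N s j (sigma : 'S_N) : size s = N.+1 ->
  sbp s (lift_perm ord0 j sigma) = (nth 0%N s j)%:R / (sumn s)%:R * sbp (rem_at j s) sigma.
Proof.
move=> sz_s; have lt_js : (j < size s)%N by rewrite sz_s.
rewrite /sbp big_ord_recl lift_perm_id; congr (_ / _ * _).
  rewrite (eq_bigl xpredT) // -(sum_nth_natr R) sz_s.
  by rewrite [RHS](reindex_inj (@perm_inj _ (lift_perm ord0 j sigma))).
apply: eq_bigr => i _; rewrite lift_perm_lift -nth_rem_at //; congr (_ / _).
rewrite big_mkcond big_ord_recl /= add0r [RHS]big_mkcond.
by apply: eq_bigr => k _; rewrite lift_perm_lift -nth_rem_at.
Qed.

Lemma sum_sbp_first N s (H : seq nat -> R) : size s = N.+1 ->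
  \sum_(sigma : 'S_N.+1) sbp s sigma * H (sb_reord s sigma) =
  \sum_(j < N.+1) ((nth 0%N s j)%:R / (sumn s)%:R *
     \sum_(sigma : 'S_N) sbp (rem_at j s) sigma *
        H (nth 0%N s j :: sb_reord (rem_at j s) sigma)).
Proof.
move=> sz_s; rewrite sum_perm_lift; apply: eq_bigr => j _; rewrite mulr_sumr.
by apply: eq_bigr => sigma _; rewrite sbp_lift // sb_reord_lift // mulrA.
Qed.

Lemma sum_sbp N s : size s = N -> all (fun x => 0 < x)%N s ->
  \sum_(sigma : 'S_N) sbp s sigma = 1.
Proof.
elim: N s => [|N IH] s sz_s s_pos.
  by rewrite (eq_bigr (fun=> 1)) ?sumr_const ?card_Sn // => sigma _; rewrite /sbp big_ord0.
under eq_bigr do rewrite -[sbp _ _]mulr1.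
rewrite (sum_sbp_first (fun=> 1)) //.
under eq_bigr => j _ do rewrite (eq_bigr _ (fun sigma _ => mulr1 _))
  IH ?mulr1 ?size_rem_at ?sz_s ?all_rem_at //.
rewrite -mulr_suml -sz_s sum_nth_natr divff // pnatr_eq0 -lt0n.
by case: s sz_s s_pos => // x s _ /andP[x_gt0 _]; exact: ltn_addr.
Qed.

Lemma sum_sbp_take m N s (g : seq nat -> R) : size s = N -> all (fun x => 0 < x)%N s ->
  \sum_(sigma : 'S_N) sbp s sigma *
     (if (m <= N)%N then g (take m (sb_reord s sigma)) else 0) = sb_mean (sumn s) s m g.
Proof.
elim: m N s g => [|m IH] N s g sz_s s_pos.
  by under eq_bigr do rewrite take0; rewrite -mulr_suml sum_sbp // mul1r.
case: N sz_s => [|N] sz_s.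
  by rewrite big1 /= ?sz_s ?big_ord0 // => sigma _; rewrite mulr0.
rewrite (sum_sbp_first (fun r => if (m < N.+1)%N then g (take m.+1 r) else 0)) //= sz_s.
apply: eq_bigr => j _; have lt_js : (j < size s)%N by rewrite sz_s.
by rewrite -(sumn_rem_at lt_js) -(IH N) ?size_rem_at ?sz_s ?all_rem_at.
Qed.

End SizeBiasedPermutations.
Arguments sbp {R N}.

Section WeightedWords.
Variables (R : realType) (mu : nat -> R).

Definition word_weight (T : nat) (w : seq nat) : R :=
  (sumn w == T)%:R * \prod_(a <- w) mu a.

Lemma word_weight_cons T a w :
  word_weight T (a :: w) = (a <= T)%N%:R * mu a * word_weight (T - a) w.
Proof.
rewrite /word_weight big_cons /=; case: leqP => [le_aT | lt_Ta].
  have -> : (a + sumn w == T)%N = (sumn w == T - a)%N by apply/eqP/eqP; lia.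
  by rewrite mul1r mulrCA.
have -> : (a + sumn w == T)%N = false by apply/eqP; lia.
by rewrite !mul0r.
Qed.

Lemma word_weight_perm T w w' : perm_eq w w' -> word_weight T w = word_weight T w'.
Proof. by move=> ww'; rewrite /word_weight (perm_sumn ww') (perm_big _ ww'). Qed.

Lemma sum_words_weight B L T : (T < B)%N -> sum_words B L (word_weight T) = conv_pow mu L T.
Proof.
elim: L T => [|L IH] T lt_TB /=.
  by rewrite /word_weight big_nil mulr1 eq_sym; case: eqP.
rewrite (big_ord_widen B (fun a => mu a * conv_pow mu L (T - a))) // [RHS]big_mkcond /=.
apply: eq_bigr => a _; rewrite (eq_sum_words _ (fun w _ => word_weight_cons T a w)).
rewrite sum_wordsZ IH; last exact: leq_ltn_trans (leq_subr a T) lt_TB.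
by rewrite ltnS; case: leqP; rewrite ?mul1r ?mul0r.
Qed.

Definition theta_seq (L T m : nat) (k : seq nat) : R :=
  (sumn k <= T)%N%:R * conv_pow mu (L - m) (T - sumn k) *
  \prod_(i < m) ((L - i)%:R / (T - sumn (take i k))%:R).

Lemma theta_seq_cons L T m a k : (a <= T)%N ->
  theta_seq L T m.+1 (a :: k) = L%:R / T%:R * theta_seq L.-1 (T - a) m k.
Proof.
move=> le_aT; rewrite /theta_seq big_ord_recl /= !subn0.
have -> : (a + sumn k <= T)%N = (sumn k <= T - a)%N by apply/idP/idP; lia.
have -> : (L - m.+1)%N = (L.-1 - m)%N by lia.
have -> : (T - (a + sumn k))%N = (T - a - sumn k)%N by lia.
have -> : \prod_(i < m) ((L - bump 0 i)%:R / (T - (a + sumn (take (0 + i) k)))%:R) =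
          \prod_(i < m) ((L.-1 - i)%:R / (T - a - sumn (take i k))%:R) :> R.
  by apply: eq_bigr => i _; rewrite add0n /bump /=; congr (_%:R / _%:R); lia.
by ring.
Qed.

Lemma sum_words_weight_sb_mean B m L T g : (T < B)%N ->
  sum_words B L (fun w => word_weight T w * sb_mean T w m g) =
  sum_words B m (fun k => \prod_(a <- k) (a%:R * mu a) * g k * theta_seq L T m k).
Proof.
elim: m L T g => [|m IH] L T g lt_TB /=.
  rewrite (@eq_sum_words _ B L _ (fun w => g [::] * word_weight T w)) => [|w _]; last exact: mulrC.
  by rewrite sum_wordsZ sum_words_weight // /theta_seq big_nil big_ord0 /= !subn0 !mul1r !mulr1.
rewrite (sum_words_pick _ _ (fun a r => a%:R / T%:R * sb_mean (T - a) r m (fun r => g (a :: r))));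
  last exact: word_weight_perm.
rewrite mulr_sumr; apply: eq_bigr => -[a lt_aB] _ /=.
rewrite (@eq_sum_words _ B L.-1 _ (fun w => (a <= T)%N%:R * mu a * (a%:R / T%:R) *
   (word_weight (T - a) w * sb_mean (T - a) w m (fun r => g (a :: r))))); last first.
  by move=> w _; rewrite word_weight_cons; ring.
rewrite sum_wordsZ; case: (leqP a T) => [le_aT | lt_Ta]; last first.
  rewrite !mul0r mulr0 -(sum_words0 _ B m); apply: eq_sum_words => k _.
  by rewrite /theta_seq /= ltn_geF ?mul0r ?mulr0 // (leq_trans lt_Ta) ?leq_addr.
rewrite IH; last exact: leq_ltn_trans (leq_subr a T) lt_TB.
rewrite -!sum_wordsZ; apply: eq_sum_words => k _.
by rewrite theta_seq_cons // big_cons mul1r; ring.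
Qed.

End WeightedWords.

Definition on_prefix (R : Type) m (f : {ffun 'I_m -> int} -> R) (k : seq nat) : R :=
  f [ffun i : 'I_m => (nth 0%N k i : int)].

Lemma on_prefix_take (R : Type) m (f : {ffun 'I_m -> int} -> R) k :
  on_prefix f (take m k) = on_prefix f k.
Proof. by congr f; apply/ffunP => i; rewrite !ffunE nth_take. Qed.

Lemma big_map_ord (V : Type) (idx : V) (op : V -> V -> V) n (d : 'I_n -> nat) (F : nat -> V) :
  \big[op/idx]_(a <- [seq d i | i <- enum 'I_n]) F a = \big[op/idx]_(i < n) F (d i).
Proof. by rewrite big_map enumT. Qed.

Lemma nth_map_ord m (k : 'I_m -> nat) (i : 'I_m) : nth 0%N [seq k j | j <- enum 'I_m] i = k i.
Proof. by rewrite (nth_map i) ?size_enum_ord ?nth_ord_enum. Qed.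

Lemma lhs_expect_words (R : realType) (mu : nat -> R) n m f :
  lhs_expect mu n m f = (conv_pow mu n n.-1)^-1 *
    sum_words n n (fun w => word_weight mu n.-1 w * sb_mean n.-1 w m (on_prefix f)).
Proof.
rewrite /lhs_expect big_mkcond -sum_wordsZ -sum_ffun_words; apply: eq_bigr => d _.
rewrite /word_weight sumnE !big_map_ord.
case: eqP => [sum_d | _]; last by rewrite !mul0r mulr0.
have pos_d : pos_entries d = positives [seq (d i : nat) | i <- enum 'I_n] by rewrite filter_map.
rewrite (eq_bigr (fun sigma => sbp (pos_entries d) sigma * (if (m <= size (pos_entries d))%N
    then on_prefix f (take m (sb_reord (pos_entries d) sigma)) else 0))) => [|sigma _]; last first.
  by rewrite on_prefix_take.
rewrite sum_sbp_take ?pos_d ?filter_all // -sb_mean_pos sumn_filter_pos sumnE big_map_ord sum_d.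
by rewrite mul1r; ring.
Qed.

Lemma rhs_expect_words (R : realType) (mu : nat -> R) n m f :
  rhs_expect mu n m f = (conv_pow mu n n.-1)^-1 * sum_words n m
    (fun k => \prod_(a <- k) (a%:R * mu a) * on_prefix f k * theta_seq mu n n.-1 m k).
Proof.
rewrite /rhs_expect -sum_wordsZ -sum_ffun_words; apply: eq_bigr => k _.
rewrite big_map_ord /on_prefix /theta_seq /Theta sumnE big_map_ord.
set ks := [seq (k j : nat) | j <- enum 'I_m].
have -> : [ffun i : 'I_m => (nth 0%N ks i : int)] = [ffun i => (k i : nat) : int].
  by apply/ffunP => i; rewrite !ffunE nth_map_ord.
have -> : \prod_(i < m) ((n - i)%:R / (n.-1 - sumn (take i ks))%:R) =
          \prod_(i < m) ((n - i)%:R / (n.-1 - \sum_(j < m | (j < i)%N) k j)%:R) :> R.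
  apply: eq_bigr => i _; rewrite sumn_take size_map size_enum_ord.
  by under eq_bigr do rewrite nth_map_ord.
by case: ifP => _; rewrite /= ?mulr1n ?mulr0n; ring.
Qed.

Theorem proposition4p3 (R : realType) (mu : nat -> R) (n m : nat)
  (f : {ffun 'I_m -> int} -> R) :
  is_law mu -> support_gcd1 mu -> critical mu ->
  0 < conv_pow mu n n.-1 ->
  (1 <= m)%N -> (m < n)%N ->
  (forall x, 0 <= f x) ->
  lhs_expect mu n m f = rhs_expect mu n m f.
Proof.
move=> _ _ _ _ _ lt_mn _.
rewrite lhs_expect_words rhs_expect_words sum_words_weight_sb_mean //.
by rewrite ltn_predL (leq_ltn_trans (leq0n m) lt_mn).
Qed.
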